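(* Let $z\in\mathbb{R}_{\ge0}^s$ with $\sum_j z_j>0$, $\eta>0$, and indices $k,k'$ with $0<z_k<z_{k'}$. Then $\eta\frac{\partial\mathcal{H}}{\partial z_k}(z)>\eta\frac{\partial\mathcal{H}}{\partial z_{k'}}(z)$. Consequently, with $\tilde z_j=\max\big(z_j-\eta\frac{\partial\mathcal{H}}{\partial z_j}(z),0\big)$, mass order is preserved, $\tilde z_k\le\tilde z_{k'}$, and the unclipped gap widens: $\big(z_{k'}-\eta\frac{\partial\mathcal{H}}{\partial z_{k'}}(z)\big)-\big(z_k-\eta\frac{\partial\mathcal{H}}{\partial z_k}(z)\big)>z_{k'}-z_k$.
   Context: $\mathcal{H}(z)=-\sum_i \frac{z_i}{\sum_j z_j}\log\frac{z_i}{\sum_j z_j}$ with $0\log0=0$; $\frac{\partial\mathcal{H}}{\partial z_j}$ is the partial derivative (for $z_j>0$). *)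

From mathcomp Require Import all_boot all_order all_algebra.
From mathcomp Require Import all_classical all_reals all_analysis.
Set Implicit Arguments. Unset Strict Implicit. Unset Printing Implicit Defensive.
Import Order.TTheory GRing.Theory Num.Theory.
Local Open Scope ring_scope.

Definition xlnx {R : realType} (p : R) : R := if p == 0 then 0 else p * ln p.

Definition entropyH {R : realType} {s : nat} (z : 'I_s -> R) : R :=
  - \sum_(i < s) xlnx (z i / \sum_(j < s) z j).

Definition upd {R : realType} {s : nat} (z : 'I_s -> R) (j : 'I_s) (x : R) : 'I_s -> R :=
  fun i => if i == j then x else z i.

Definition dH {R : realType} {s : nat} (z : 'I_s -> R) (j : 'I_s) : R :=
  derive1 (fun x : R => entropyH (upd z j x)) (z j).

From mathcomp Require Import all_boot all_order all_algebra.
From mathcomp Require Import all_classical all_reals all_analysis.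
From mathcomp Require Import ring lra.
Import Order.TTheory GRing.Theory Num.Theory.
Local Open Scope ring_scope.

(* For nonnegative weights with total S > 0 the entropy is H = ln S - T / S with
   T = sum_i z_i ln z_i.  Along the j-th coordinate, with c = S - z_j and
   d = T - z_j ln z_j held fixed, H is y |-> ln (c + y) - (d + y ln y) / (c + y),
   whence dH/dz_j = T / S^2 - ln z_j / S.  The first term does not depend on j
   and ln is strictly increasing, so dH/dz_j strictly decreases in z_j. *)

Section EntropyPartials.
Variable R : realType.

Lemma xlnxE {x : R} : 0 < x -> xlnx x = x * ln x.
Proof. by move=> x_gt0; rewrite /xlnx gt_eqF. Qed.

Lemma xlnx_div (w S : R) : 0 <= w -> 0 < S ->
  xlnx (w / S) = xlnx w / S - w / S * ln S.
Proof.
move=> w_ge0 S_gt0; have [->|w_neq0] := eqVneq w 0.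
  by rewrite /xlnx !mul0r eqxx; lra.
have w_gt0 : 0 < w by rewrite lt_neqAle eq_sym w_neq0.
rewrite !xlnxE ?divr_gt0 // ln_div ?posrE //; field; by rewrite gt_eqF.
Qed.

Lemma is_derive_entropy_slice (c d x : R) : 0 <= c -> 0 < x ->
  is_derive x 1 (fun y => ln (c + y) - (d + y * ln y) / (c + y))
    ((d + x * ln x) / (c + x) ^+ 2 - ln x / (c + x)).
Proof.
move=> c_ge0 x_gt0; have cx_neq0 : c + x != 0 by rewrite gt_eqF //; lra.
have dS : is_derive x 1 (fun y : R => c + y) 1.
  exact: is_derive_eq (is_deriveD (is_derive_cst c x 1) (is_derive_id x 1)) (add0r _).
have dlnS : is_derive x 1 (fun y : R => ln (c + y)) ((c + x)^-1 * 1).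
  by apply: is_derive1_comp dS; apply: is_derive1_ln; lra.
apply: is_derive_eq.
  apply: is_deriveB dlnS (is_deriveM (is_deriveD (is_derive_cst d x 1)
    (is_deriveM (is_derive_id x 1) (is_derive1_ln x_gt0))) (is_deriveV cx_neq0 dS)).
rewrite -![_ *: _]/(_ * _) mulfV ?gt_eqF //.
have -> : (cst d + id * @ln R) x = d + x * ln x by [].
by field.
Qed.

Variable s : nat.
Implicit Types z : 'I_s -> R.

Lemma big_upd {V : zmodType} (F : R -> V) z j x :
  \sum_(i < s) F (upd z j x i) = \sum_(i < s) F (z i) - F (z j) + F x.
Proof.
rewrite (bigD1 j) //= [in RHS](bigD1 j) //= /upd eqxx.
rewrite (eq_bigr (fun i => F (z i))) => [|i /negbTE -> //].
by rewrite [F (z j) + _]addrC addrK addrC.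
Qed.

Lemma ler_term_sum z j : (forall i, 0 <= z i) -> z j <= \sum_(i < s) z i.
Proof. by move=> z_ge0; rewrite (bigD1 j) //= lerDl sumr_ge0. Qed.

Lemma entropyHE z : (forall i, 0 <= z i) -> 0 < \sum_(i < s) z i ->
  entropyH z = ln (\sum_(i < s) z i) - (\sum_(i < s) xlnx (z i)) / \sum_(i < s) z i.
Proof.
move=> z_ge0 S_gt0; rewrite /entropyH.
under eq_bigr => i _ do rewrite xlnx_div //.
rewrite sumrB -!mulr_suml mulfV ?gt_eqF //; ring.
Qed.

Lemma dHE z j : (forall i, 0 <= z i) -> 0 < z j ->
  dH z j = (\sum_(i < s) xlnx (z i)) / (\sum_(i < s) z i) ^+ 2
           - ln (z j) / \sum_(i < s) z i.
Proof.
move=> z_ge0 zj_gt0.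
set S := \sum_(i < s) z i; set T := \sum_(i < s) xlnx (z i).
have c_ge0 : 0 <= S - z j by rewrite subr_ge0 ler_term_sum.
rewrite /dH derive1E (@near_eq_derive _ _ _ _
  (fun y => ln (S - z j + y) - (T - xlnx (z j) + y * ln y) / (S - z j + y))); last first.
  near=> y.
  have y_gt0 : 0 < y by near: y; exact: lt_nbhsr.
  have upd_ge0 i : 0 <= upd z j y i.
    by rewrite /upd; case: ifP => _; [exact: ltW | exact: z_ge0].
  have sum_upd : \sum_(i < s) upd z j y i = S - z j + y := big_upd id z j y.
  rewrite entropyHE //; last by rewrite sum_upd; lra.
  by rewrite sum_upd (big_upd xlnx) (xlnxE y_gt0).
rewrite (@derive_val _ _ _ _ _ _ _ (is_derive_entropy_slice _ (T - xlnx (z j)) _ c_ge0 zj_gt0)).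
by rewrite subrK -xlnxE // subrK.
Unshelve. all: by end_near.
Qed.

Lemma lt_dH z k k' : (forall i, 0 <= z i) -> 0 < z k -> z k < z k' -> dH z k' < dH z k.
Proof.
move=> z_ge0 zk_gt0 zkk'; have zk'_gt0 : 0 < z k' by lra.
rewrite !dHE // ltrD2l ltrN2 ltr_pM2r ?invr_gt0 ?ltr_ln ?posrE //.
by apply: lt_le_trans zk_gt0 _; exact: ler_term_sum.
Qed.

End EntropyPartials.

Theorem corollary4 (R : realType) (s : nat) (z : 'I_s -> R) (eta : R) (k k' : 'I_s) :
  (forall j, 0 <= z j) -> 0 < \sum_(j < s) z j -> 0 < eta ->
  0 < z k -> z k < z k' ->
  [/\ eta * dH z k > eta * dH z k',
      Num.max (z k - eta * dH z k) 0 <= Num.max (z k' - eta * dH z k') 0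
    & (z k' - eta * dH z k') - (z k - eta * dH z k) > z k' - z k].
Proof.
(* The hypothesis on the total mass is implied by 0 < z k. *)
move=> z_ge0 _ eta_gt0 zk_gt0 zkk'.
have step_gap : eta * dH z k' < eta * dH z k by rewrite ltr_pM2l // lt_dH.
have step_order : z k - eta * dH z k <= z k' - eta * dH z k' by lra.
by split; [| exact: le_max2 | lra].
Qed.
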